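(* Consider a wireless localization network with $n$ anchors and $N_a$ agents. For each agent $k\in\{1,\dots,N_a\}$ let $\phi_{k1},\dots,\phi_{kn}\in\mathbb{R}$, $\xi_{k1},\dots,\xi_{kn}\ge 0$ and a localization requirement $\varrho_k>0$ be given; let $\mathbf{R}_k=\operatorname{diag}\{\xi_{k1},\dots,\xi_{kn}\}$, $\mathbf{c}_k=[\cos2\phi_{k1},\dots,\cos2\phi_{kn}]^{\mathsf T}$, $\mathbf{s}_k=[\sin2\phi_{k1},\dots,\sin2\phi_{kn}]^{\mathsf T}$. For $\mathbf{x}\in\mathbb{R}^n$, $\mathbf{x}\succeq\mathbf{0}$, define $\mathcal{P}(\mathbf{p}_k;\mathbf{x})=\operatorname{tr}\{(\sum_{j=1}^n x_j\xi_{kj}\mathbf{u}(\phi_{kj})\mathbf{u}(\phi_{kj})^{\mathsf T})^{-1}\}$ (equal to $+\infty$ if the matrix is singular). Let $c_1,\dots,c_L$ be affine functions on $\mathbb{R}^n$. Then the problem $$\min_{\mathbf{x}\succeq\mathbf{0}}\ \mathbf{1}^{\mathsf T}\mathbf{x}\quad\text{s.t.}\quad \mathcal{P}(\mathbf{p}_k;\mathbf{x})\le\varrho_k\ \ \forall k,\qquad c_l(\mathbf{x})\le 0\ \ (l=1,\dots,L)$$ is equivalent to the second-order cone program $$\min_{\mathbf{x}\succeq\mathbf{0}}\ \mathbf{1}^{\mathsf T}\mathbf{x}\quad\text{s.t.}\quad \big\|\mathbf{A}_k\mathbf{R}_k\mathbf{x}+\mathbf{b}_k\big\|\le \mathbf{1}^{\mathsf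 T}\mathbf{R}_k\mathbf{x}-2\varrho_k^{-1}\ \ \forall k,\qquad c_l(\mathbf{x})\le 0\ \ (l=1,\dots,L),$$ where $\mathbf{A}_k=[\mathbf{c}_k\ \ \mathbf{s}_k\ \ \mathbf{0}]^{\mathsf T}\in\mathbb{R}^{3\times n}$ and $\mathbf{b}_k=[0\ \ 0\ \ 2\varrho_k^{-1}]^{\mathsf T}$.
   Context: $\mathbf{u}(\phi)=[\cos\phi\ \ \sin\phi]^{\mathsf T}$; $\mathbf{1}$ is the all-ones vector, $\mathbf{0}$ the zero vector; $\|\cdot\|$ is the Euclidean norm; $\mathbf{x}\succeq\mathbf{0}$ means entrywise nonnegative. $\mathbf{x}$ is the vector of anchor transmit powers and $\mathcal{P}(\mathbf{p}_k;\mathbf{x})$ is the squared position error bound of agent $k$. ''Equivalent'' means the two problems have the same feasible set (and objective). *)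

From HB Require Import structures.
From mathcomp Require Import all_boot all_order all_algebra.
From mathcomp Require Import all_classical all_reals all_analysis.
Set Implicit Arguments. Unset Strict Implicit. Unset Printing Implicit Defensive.
Import Order.TTheory GRing.Theory Num.Theory.
Local Open Scope ring_scope.

Section Defs.
Variable R : realType.

Definition uvec (phi : R) : 'cV[R]_2 :=
  \col_(i < 2) (if (i == 0 :> nat) then cos phi else sin phi).

Definition nonneg_vec (n : nat) (x : 'cV[R]_n) : Prop := forall i, 0 <= x i 0.

Definition eucl_norm (m : nat) (v : 'cV[R]_m) : R :=
  Num.sqrt (\sum_(i < m) (v i 0) ^+ 2).

Definition affine_fun (n : nat) (f : 'cV[R]_n -> R) : Prop :=
  exists (a : 'rV[R]_n) (d : R), forall x, f x = (a *m x) 0 0 + d.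

Definition EFIM (n : nat) (phi xi : 'I_n -> R) (x : 'cV[R]_n) : 'M[R]_2 :=
  \sum_(j < n) (x j 0 * xi j) *: (uvec (phi j) *m (uvec (phi j))^T).

Definition SPEB (n : nat) (phi xi : 'I_n -> R) (x : 'cV[R]_n) : \bar R :=
  let J := EFIM phi xi x in
  if J \in unitmx then (\tr (invmx J))%:E else +oo%E.

Definition Rmat (n : nat) (xi : 'I_n -> R) : 'M[R]_n := diag_mx (\row_j xi j).

Definition Amat (n : nat) (phi : 'I_n -> R) : 'M[R]_(3, n) :=
  \matrix_(i < 3, j < n)
    (if (i == 0 :> nat) then cos (2 * phi j)
     else if (i == 1 :> nat) then sin (2 * phi j) else 0).

Definition bvec (rho : R) : 'cV[R]_3 :=
  \col_(i < 3) (if (i == 2 :> nat) then 2 * rho^-1 else 0).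

Definition soc_constr (n : nat) (phi xi : 'I_n -> R) (rho : R) (x : 'cV[R]_n) : Prop :=
  eucl_norm (Amat phi *m Rmat xi *m x + bvec rho)
    <= ((const_mx 1 : 'rV[R]_n) *m Rmat xi *m x) 0 0 - 2 * rho^-1.

Definition feasible_orig (n Na L : nat) (phi xi : 'I_Na -> 'I_n -> R)
  (rho : 'I_Na -> R) (c : 'I_L -> 'cV[R]_n -> R) (x : 'cV[R]_n) : Prop :=
  nonneg_vec x /\
  (forall k, (SPEB (phi k) (xi k) x <= (rho k)%:E)%E) /\
  (forall l, c l x <= 0).

Definition feasible_socp (n Na L : nat) (phi xi : 'I_Na -> 'I_n -> R)
  (rho : 'I_Na -> R) (c : 'I_L -> 'cV[R]_n -> R) (x : 'cV[R]_n) : Prop :=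
  nonneg_vec x /\
  (forall k, soc_constr (phi k) (xi k) (rho k) x) /\
  (forall l, c l x <= 0).

Definition objective (n : nat) (x : 'cV[R]_n) : R :=
  ((const_mx 1 : 'rV[R]_n) *m x) 0 0.

End Defs.

From HB Require Import structures.
From mathcomp Require Import all_boot all_order all_algebra.
From mathcomp Require Import all_classical all_reals all_analysis.
From mathcomp Require Import ring lra.
Set Implicit Arguments. Unset Strict Implicit. Unset Printing Implicit Defensive.
Import Order.TTheory GRing.Theory Num.Theory.
Local Open Scope ring_scope.

(* The information matrix [J = sum_j x_j xi_j u u^T] is positive semidefinite,
   with trace [t = 1^T R x] and determinant [D]; by the double-angle formulas
   [A R x = (J00 - J11, 2 J01, 0)], whose squared norm is [t^2 - 4 D].  So the
   cone constraint says [sqrt (t^2 - 4D + 4/rho^2) <= t - 2/rho], i.e.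
   [t >= 2/rho] and [D >= t/rho], while [tr J^-1 = t/D <= rho] says [D > 0] and
   [D >= t/rho].  These agree because [t^2 >= 4D], which forces [t >= 4/rho]
   as soon as [D >= t/rho > 0]. *)

Lemma sum_ord2 (V : nmodType) (f : 'I_2 -> V) : \sum_(i < 2) f i = f 0 + f 1.
Proof. by rewrite big_ord_recl big_ord1; congr (_ + f _); apply: val_inj. Qed.

Lemma sum_ord3 (V : nmodType) (f : 'I_3 -> V) :
  \sum_(i < 3) f i = f 0 + f 1 + f 2.
Proof.
by rewrite big_ord_recl sum_ord2 addrA; congr (_ + f _ + f _); apply: val_inj.
Qed.

Section Matrix22.
Variable K : comUnitRingType.
Implicit Type A : 'M[K]_2.

Let lift00 : lift 0 ord0 = 1 :> 'I_2. Proof. exact: val_inj. Qed.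
Let lift10 : lift 1 ord0 = 0 :> 'I_2. Proof. exact: val_inj. Qed.

Lemma det_mx22 A : \det A = A 0 0 * A 1 1 - A 0 1 * A 1 0.
Proof.
rewrite (expand_det_row _ 0) sum_ord2 /cofactor !det_mx11 !mxE /= lift00 lift10.
by rewrite expr0 expr1 mul1r mulN1r mulrN.
Qed.

Lemma mxtrace22 A : \tr A = A 0 0 + A 1 1.
Proof. by rewrite /mxtrace sum_ord2. Qed.

Lemma mxtrace_adj22 A : \tr (\adj A) = \tr A.
Proof.
rewrite !mxtrace22 !mxE /cofactor !det_mx11 !mxE /= lift00 lift10.
by rewrite addn0 modn_small // expr0 sqrrN expr1n !mul1r addrC.
Qed.

Lemma mxtrace_invmx22 A : A \in unitmx -> \tr (invmx A) = \tr A / \det A.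
Proof. by move=> A_unit; rewrite /invmx A_unit mxtraceZ mxtrace_adj22 mulrC. Qed.

End Matrix22.

Section RealField.
Variable R : realFieldType.

Lemma quad_form_discr_le (a b d : R) : 0 <= a -> 0 <= d ->
  (forall s t, 0 <= a * s ^+ 2 + 2 * b * s * t + d * t ^+ 2) -> b ^+ 2 <= a * d.
Proof.
move=> a_ge0 d_ge0 Q.
(* The form takes the values [a (a d - b^2)] at [(b, -a)] and [d (a d - b^2)] at [(d, -b)]. *)
have [ad_gt0 | ad_le0] := ltrP 0 (a + d).
  have : 0 <= (a + d) * (a * d - b ^+ 2) by move: (Q b (- a)) (Q d (- b)); nra.
  by rewrite pmulr_rge0 // subr_ge0.
have [-> ->] : a = 0 /\ d = 0 by lra.
by move: (Q 1 (- b)); nra.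
Qed.

Lemma weighted_cauchy_schwarz (I : finType) (w u v : I -> R) :
  (forall i, 0 <= w i) ->
  (\sum_i w i * (u i * v i)) ^+ 2 <=
    (\sum_i w i * u i ^+ 2) * (\sum_i w i * v i ^+ 2).
Proof.
move=> w_ge0; have sum_sqr_ge0 (f : I -> R) : 0 <= \sum_i w i * f i ^+ 2.
  by apply: sumr_ge0 => i _; rewrite mulr_ge0 ?sqr_ge0.
apply: quad_form_discr_le => // s t.
have -> : (\sum_i w i * u i ^+ 2) * s ^+ 2 + 2 * (\sum_i w i * (u i * v i)) * s * t
    + (\sum_i w i * v i ^+ 2) * t ^+ 2 = \sum_i w i * (s * u i + t * v i) ^+ 2.
  rewrite !mulr_suml mulr_sumr !mulr_suml -!big_split /=.
  by apply: eq_bigr => i _; ring.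
exact: sum_sqr_ge0.
Qed.

End RealField.

Section RealClosed.
Variable R : rcfType.

Lemma sqrtr_le_iff (u y : R) : 0 <= u ->
  Num.sqrt u <= y <-> 0 <= y /\ u <= y ^+ 2.
Proof.
move=> u_ge0; split=> [le_sqrt_y | [y_ge0 le_u_y2]].
  have y_ge0 : 0 <= y := le_trans (sqrtr_ge0 u) le_sqrt_y.
  split=> //; rewrite -(sqr_sqrtr u_ge0).
  by rewrite ler_pXn2r ?nnegrE ?sqrtr_ge0.
by rewrite -(ler_pXn2r (n := 2)) ?nnegrE ?sqrtr_ge0 ?sqr_sqrtr.
Qed.

Lemma trace_ratio_le_iff_soc (t D r : R) :
  0 < r -> 0 <= t -> 0 <= D -> 4 * D <= t ^+ 2 ->
  (D != 0 /\ t / D <= r) <-> Num.sqrt (t ^+ 2 - 4 * D + (2 / r) ^+ 2) <= t - 2 / r.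
Proof.
move=> r_gt0 t_ge0 D_ge0 D_le; set q := r^-1.
have q_gt0 : 0 < q by rewrite invr_gt0.
rewrite sqrtr_le_iff; last by nra.
have ratio_le : 0 < D -> (t / D <= r) = (t * q <= D).
  by move=> D_gt0; rewrite !ler_pdivrMr // mulrC.
split=> [[D_neq0] | [t2q_ge0 le_sq]].
  have D_gt0 : 0 < D by rewrite lt_def D_neq0.
  by rewrite ratio_le // => tq_le; split; nra.
have D_gt0 : 0 < D by nra.
by rewrite ratio_le // gt_eqF //; split=> //; nra.
Qed.
End RealClosed.

Section Agent.
Variables (R : realType) (n : nat) (phi xi : 'I_n -> R) (x : 'cV[R]_n).
Let w k := x k 0 * xi k.
Let J := EFIM phi xi x.

Lemma EFIM_entry i j : J i j = \sum_k w k * (uvec (phi k) i 0 * uvec (phi k) j 0).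
Proof.
rewrite /J /EFIM summxE; apply: eq_bigr => k _.
by rewrite !mxE big_ord1 !mxE.
Qed.

Lemma det_EFIM : \det J = J 0 0 * J 1 1 - J 0 1 ^+ 2.
Proof.
rewrite det_mx22 expr2; congr (_ - _ * _).
by rewrite !EFIM_entry; apply: eq_bigr => k _; rewrite [X in _ * X]mulrC.
Qed.

Lemma Amat_Rmat_mulE i : (Amat phi *m Rmat xi *m x) i 0 = \sum_k w k * Amat phi i k.
Proof.
rewrite mxE /Rmat mul_mx_diag; apply: eq_bigr => k _; rewrite !mxE /w; ring.
Qed.

Lemma Amat_Rmat_mul0 : (Amat phi *m Rmat xi *m x) 0 0 = J 0 0 - J 1 1.
Proof.
rewrite Amat_Rmat_mulE !EFIM_entry -sumrB; apply: eq_bigr => k _.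
rewrite !mxE /= mulr_natl cos_mulr2n -!expr2 sin2cos2; ring.
Qed.

Lemma Amat_Rmat_mul1 : (Amat phi *m Rmat xi *m x) 1 0 = 2 * J 0 1.
Proof.
rewrite Amat_Rmat_mulE !EFIM_entry mulr_sumr; apply: eq_bigr => k _.
rewrite !mxE /= mulr_natl sin_mulr2n; ring.
Qed.

Lemma Amat_Rmat_mul2 : (Amat phi *m Rmat xi *m x) 2 0 = 0.
Proof. by rewrite Amat_Rmat_mulE big1 // => k _; rewrite !mxE mulr0. Qed.

Lemma ones_Rmat_mul : ((const_mx 1 : 'rV[R]_n) *m Rmat xi *m x) 0 0 = \tr J.
Proof.
rewrite mxtrace22 mxE /Rmat mul_mx_diag !EFIM_entry -big_split; apply: eq_bigr => k _.
by rewrite !mxE /w /= -mulrDr -!expr2 cos2Dsin2 mulr1 mul1r mulrC.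
Qed.

Hypotheses (x_ge0 : nonneg_vec x) (xi_ge0 : forall j, 0 <= xi j).

Let w_ge0 k : 0 <= w k. Proof. exact: mulr_ge0. Qed.

Lemma EFIM_diag_ge0 i : 0 <= J i i.
Proof. by rewrite EFIM_entry; apply: sumr_ge0 => k _; rewrite mulr_ge0 // -expr2 sqr_ge0. Qed.

Lemma EFIM_cauchy_schwarz : J 0 1 ^+ 2 <= J 0 0 * J 1 1.
Proof. by rewrite !EFIM_entry; apply: weighted_cauchy_schwarz. Qed.

Lemma det_EFIM_ge0 : 0 <= \det J.
Proof. by rewrite det_EFIM subr_ge0 EFIM_cauchy_schwarz. Qed.

Lemma det_EFIM_le_trace : 4 * \det J <= \tr J ^+ 2.
Proof.
have -> : \tr J ^+ 2 = 4 * \det J + (J 0 0 - J 1 1) ^+ 2 + 4 * J 0 1 ^+ 2.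
  by rewrite mxtrace22 det_EFIM; ring.
by rewrite -addrA lerDl addr_ge0 ?sqr_ge0 // mulr_ge0 ?sqr_ge0.
Qed.

Lemma soc_norm r : eucl_norm (Amat phi *m Rmat xi *m x + bvec r) =
  Num.sqrt (\tr J ^+ 2 - 4 * \det J + (2 / r) ^+ 2).
Proof.
rewrite /eucl_norm sum_ord3 ![(_ + bvec r) _ _]mxE.
rewrite Amat_Rmat_mul0 Amat_Rmat_mul1 Amat_Rmat_mul2 !mxE /= mxtrace22 det_EFIM.
by congr Num.sqrt; ring.
Qed.

Lemma SPEB_le_iff r :
  (SPEB phi xi x <= r%:E)%E <-> \det J != 0 /\ \tr J / \det J <= r.
Proof.
rewrite /SPEB -/J unitmxE unitfE.
have [_ | detJ_neq0] := eqVneq (\det J) 0; first by split=> [|[]].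
by rewrite lee_fin mxtrace_invmx22 ?unitmxE ?unitfE //; split=> [|[]].
Qed.

Lemma SPEB_le_iff_soc_constr r :
  0 < r -> (SPEB phi xi x <= r%:E)%E <-> soc_constr phi xi r x.
Proof.
move=> r_gt0; rewrite SPEB_le_iff /soc_constr soc_norm ones_Rmat_mul.
apply: trace_ratio_le_iff_soc => //.
- by rewrite mxtrace22 addr_ge0 ?EFIM_diag_ge0.
- exact: det_EFIM_ge0.
- exact: det_EFIM_le_trace.
Qed.

End Agent.

Theorem proposition3 (R : realType) (n Na L : nat)
  (phi xi : 'I_Na -> 'I_n -> R) (rho : 'I_Na -> R)
  (c : 'I_L -> 'cV[R]_n -> R)
  (hxi : forall k j, 0 <= xi k j)
  (hrho : forall k, 0 < rho k)
  (hc : forall l, affine_fun (c l)) :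
  forall x : 'cV[R]_n,
    feasible_orig phi xi rho c x <-> feasible_socp phi xi rho c x.
Proof.
(* The affine constraints are shared by both problems. *)
move=> x; split=> -[x_ge0 [agents cons]]; split=> //; split=> // k;
  exact/(SPEB_le_iff_soc_constr (phi k) x_ge0 (hxi k) (hrho k))/agents.
Qed.
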